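(* Let $C\subseteq\mathbb{R}^n$ be a nonempty closed convex set and let $f:\mathbb{R}^n\times\mathbb{R}^n\to\mathbb{R}\cup\{+\infty\}$ satisfy $f(x,x)=0$ for all $x\in C$ and $C\times C\subseteq \operatorname{dom} f$. Let $S(EP)$ denote the set of $x^*\in C$ with $f(x^*,y)\ge 0$ for all $y\in C$. Assume: (A1) for every $x\in C$ the function $f(x,\cdot)$ is quasiconvex, and $f$ is upper semicontinuous on an open set containing $C\times C$; (A2) $f$ is pseudomonotone on $C$, i.e. for all $x,y\in C$, $f(x,y)\ge 0\Rightarrow f(y,x)\le 0$; and $f$ is paramonotone on $C$ with respect to $S(EP)$, i.e. if $x\in S(EP)$, $y\in C$ and $f(x,y)=f(y,x)=0$, then $y\in S(EP)$; (A3) $S(EP)\neq\emptyset$. Suppose the Normal-subgradient method described in the context does not terminate, let $\{x^k\}$ be the infinite sequence it generates, and let $\{x^{k_q}\}$ be the subsequence of $\{x^k\}$ consisting of all iterates belonging to $S(EP)$. Then: (a) if $\{x^{k_q}\}$ is infinite, then $\lim_{k\to\infty} d(x^k,S(EP))=0$; (b) if $\{x^{k_q}\}$ is finite, then $\{x^k\}$ converges to a point of $S(EP)$.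
   Context: A function $\varphi$ is quasiconvex if $\varphi((1-\lambda)x+\lambda y)\le\max\{\varphi(x),\varphi(y)\}$ for all $x,y$ and $\lambda\in[0,1]$. $d(x,S)$ is the Euclidean distance from $x$ to the set $S$. For $x\in C$ let $L_f(x):=\{y\in\mathbb{R}^n: f(x,y)<f(x,x)=0\}$ and $\partial_2^* f(x,x):=\{g\in\mathbb{R}^n:\ \langle g,y-x\rangle<0 \ \text{for all } y\in L_f(x)\}$. $P_C$ denotes the Euclidean projection onto $C$. Normal-subgradient method: fix a real sequence $\{\alpha_k\}$ with $\alpha_k>0$ for all $k$, $\sum_{k}\alpha_k=+\infty$ and $\sum_k\alpha_k^2<+\infty$. Choose $x^0\in C$. At iteration $k$ (with $x^k\in C$): take $g^k\in\partial_2^* f(x^k,x^k)$; if $g^k=0$, stop; otherwise replace $g^k$ by $g^k/\|g^k\|$ (so $\|g^k\|=1$), and set $x^{k+1}=P_C(x^k-\alpha_k g^k)$; if $x^{k+1}=x^k$, stop; otherwise increase $k$ by one and repeat. *)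

(* R : realType, points of R^n are row vectors 'rV[R]_n
   (with the library's product topology = Euclidean topology). *)
From HB Require Import structures.
From mathcomp Require Import all_boot all_order all_algebra.
From mathcomp Require Import all_classical all_reals all_analysis.
Set Implicit Arguments. Unset Strict Implicit. Unset Printing Implicit Defensive.
Import Order.TTheory GRing.Theory Num.Theory.
Import numFieldNormedType.Exports.
Local Open Scope classical_set_scope.
Local Open Scope ring_scope.

Section Defs.
Variables (R : realType) (n : nat).
Notation V := 'rV[R]_n.

Definition dotp (u v : V) : R := \sum_(i < n) u ord0 i * v ord0 i.
Definition enorm (u : V) : R := Num.sqrt (dotp u u).

Definition dist_set (x : V) (S : set V) : R := inf [set enorm (x - y) | y in S].

Definition quasiconvex (phi : V -> \bar R) : Prop :=
  forall (x y : V) (l : R), 0 <= l <= 1 ->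
    (phi ((1 - l) *: x + l *: y)%R <= Order.max (phi x) (phi y))%E.

Definition usc_at (F : V * V -> \bar R) (p : V * V) : Prop :=
  forall t : R, (F p < t%:E)%E -> \forall q \near p, (F q < t%:E)%E.

Definition SEP (C : set V) (f : V -> V -> \bar R) : set V :=
  [set xs | C xs /\ forall y, C y -> (0 <= f xs y)%E].

Definition pseudomonotone_on (C : set V) (f : V -> V -> \bar R) : Prop :=
  forall x y, C x -> C y -> (0 <= f x y)%E -> (f y x <= 0)%E.

Definition paramonotone_on (C : set V) (f : V -> V -> \bar R) : Prop :=
  forall x y, SEP C f x -> C y -> f x y = 0%E -> f y x = 0%E -> SEP C f y.

(* L_f(x) = { y | f(x,y) < f(x,x) = 0 } *)
Definition Lf (f : V -> V -> \bar R) (x : V) : set V :=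
  [set y | (f x y < 0)%E].

Definition normal_subdiff (f : V -> V -> \bar R) (x : V) : set V :=
  [set g | forall y, Lf f x y -> dotp g (y - x) < 0].

Definition is_proj (C : set V) (z p : V) : Prop :=
  C p /\ forall y, C y -> enorm (z - p) <= enorm (z - y).

End Defs.

From HB Require Import structures.
From mathcomp Require Import all_boot all_order all_algebra.
From mathcomp Require Import all_classical all_reals all_analysis.
From mathcomp Require Import ring lra.
Import Order.TTheory GRing.Theory Num.Theory.
Import numFieldNormedType.Exports.
Set Implicit Arguments. Unset Strict Implicit. Unset Printing Implicit Defensive.
Local Open Scope classical_set_scope.
Local Open Scope ring_scope.

(* Each step moves by [alpha k] along the unit normal direction [gdir k] and
   projects back onto [C], so for every [y] in [C]
     |x(k+1) - y|^2 <= |x k - y|^2 - 2 alpha k <gdir k, x k - y> + alpha k ^2.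
   Pseudo- and paramonotonicity give [f (x k) y < 0] whenever [x k] is not a
   solution and [y] is one; then [y] lies in [L_f (x k)], so
   [<gdir k, x k - y> > 0] and [|x k - y|^2] grows by at most [alpha k ^2].
   (a) The same bound holds for [d(x k, S)^2], which vanishes infinitely often;
   as [sum alpha k ^2 < oo], it tends to 0.
   (b) Eventually no iterate is a solution. Fix a solution [xs]: the iterates
   stay bounded and, since [sum alpha k = oo], [<gdir k, x k - xs>] is
   infinitely often small. A cluster point [xb] of the iterates along which it
   is small is a solution: otherwise [f xb xs < 0], and upper semicontinuity
   puts [xs + (e/2) gdir k] in [L_f (x k)] although its inner product with
   [gdir k] exceeds that of [x k]. Quasi-Fejer monotonicity with respect to
   [xb] then gives [x k --> xb]. *)

Lemma le0_of_le_scale01 (R : realFieldType) (A B : R) :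
  0 <= B -> (forall t, 0 < t <= 1 -> A <= t * B) -> A <= 0.
Proof.
move=> B0 hAB; apply/ler_addgt0Pr => e e0; rewrite add0r.
have B1 : 0 < B + 1 by rewrite ltr_wpDl.
pose t := Num.min 1 (e / (B + 1)).
have t01 : 0 < t <= 1 by rewrite lt_min ltr01 divr_gt0 //= ge_min lexx.
have te : t <= e / (B + 1) by rewrite ge_min lexx orbT.
apply: le_trans (hAB t t01) _; apply: le_trans (ler_wpM2r B0 te) _.
by rewrite mulrAC ler_pdivrMr // ler_pM2l //; lra.
Qed.

Section Euclidean.
Variables (R : realType) (n : nat).
Notation V := 'rV[R]_n.
Implicit Types (u v w y z : V) (S C : set V).

Lemma dotpC u v : dotp u v = dotp v u.
Proof. by apply: eq_bigr => i _; rewrite mulrC. Qed.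

Lemma dotpDl u v w : dotp (u + v) w = dotp u w + dotp v w.
Proof. by rewrite /dotp -big_split; apply: eq_bigr => i _; rewrite !mxE mulrDl. Qed.

Lemma dotpZl (a : R) u w : dotp (a *: u) w = a * dotp u w.
Proof. by rewrite /dotp mulr_sumr; apply: eq_bigr => i _; rewrite !mxE mulrA. Qed.

Lemma dotpNl u w : dotp (- u) w = - dotp u w.
Proof. by rewrite -scaleN1r dotpZl mulN1r. Qed.

Lemma dotpBl u v w : dotp (u - v) w = dotp u w - dotp v w.
Proof. by rewrite dotpDl dotpNl. Qed.

Lemma dotpZr (a : R) u w : dotp w (a *: u) = a * dotp w u.
Proof. by rewrite dotpC dotpZl dotpC. Qed.

Lemma dotpDr u v w : dotp w (u + v) = dotp w u + dotp w v.
Proof. by rewrite dotpC dotpDl !(dotpC w). Qed.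

Lemma dotpNr u w : dotp w (- u) = - dotp w u.
Proof. by rewrite dotpC dotpNl dotpC. Qed.

Lemma dotpBr u v w : dotp w (u - v) = dotp w u - dotp w v.
Proof. by rewrite dotpDr dotpNr. Qed.

Lemma dotp0r u : dotp u 0 = 0.
Proof. by rewrite -(scale0r 0) dotpZr mul0r. Qed.

Lemma dotp_ge0 u : 0 <= dotp u u.
Proof. by apply: sumr_ge0 => i _; rewrite -expr2 sqr_ge0. Qed.

Lemma dotp_eq0 u : (dotp u u == 0) = (u == 0).
Proof.
apply/idP/eqP => [/eqP|->]; last by rewrite dotp0r.
move/psumr_eq0P => u0; apply/rowP => i; rewrite !mxE.
by apply/eqP; rewrite -sqrf_eq0 expr2 u0 // => j _; rewrite -expr2 sqr_ge0.
Qed.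

Lemma enorm_ge0 u : 0 <= enorm u.
Proof. exact: sqrtr_ge0. Qed.

Lemma sqr_enorm u : enorm u ^+ 2 = dotp u u.
Proof. by rewrite sqr_sqrtr // dotp_ge0. Qed.

Lemma enorm_gt0 u : (0 < enorm u) = (u != 0).
Proof. by rewrite sqrtr_gt0 lt_def dotp_eq0 dotp_ge0 andbT. Qed.

Lemma enorm0 : enorm (0 : V) = 0.
Proof. by rewrite /enorm dotp0r sqrtr0. Qed.

Lemma enormZ (a : R) u : enorm (a *: u) = `|a| * enorm u.
Proof. by rewrite /enorm dotpZl dotpZr mulrA -expr2 sqrtrM ?sqr_ge0 // sqrtr_sqr. Qed.

Lemma enormB u v : enorm (u - v) = enorm (v - u).
Proof. by rewrite -opprB -scaleN1r enormZ normrN1 mul1r. Qed.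

Lemma mx_norm_le_enorm u : `|u| <= enorm u.
Proof.
rewrite [leLHS]mx_normrE; apply/bigmax_leP; split=> [|[i j] _ /=]; first exact: enorm_ge0.
rewrite (ord1 i) -(@ler_pXn2r _ 2) ?nnegrE ?enorm_ge0 // sqr_enorm real_normK ?num_real //.
rewrite /dotp (bigD1 j) //= -expr2 lerDl; apply: sumr_ge0 => k _.
by rewrite -expr2 sqr_ge0.
Qed.

Lemma dotp_le_mx_norm u : dotp u u <= n%:R * `|u| ^+ 2.
Proof.
have -> : n%:R * `|u| ^+ 2 = \sum_(i < n) `|u| ^+ 2 by rewrite sumr_const card_ord mulr_natl.
apply: ler_sum => i _.
rewrite -expr2 -real_normK ?num_real // lerXn2r ?nnegrE // [leRHS]mx_normrE.
exact: (le_bigmax _ (fun ij : 'I_1 * 'I_n => `|u ij.1 ij.2|) (ord0, i)).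
Qed.


Lemma is_proj_dotp_le0 C z p y : convex_set C ->
  is_proj C z p -> C y -> dotp (z - p) (y - p) <= 0.
Proof.
move=> C_convex [Cp p_min] Cy.
have /le0_of_le_scale01 : 0 <= dotp (y - p) (y - p) by exact: dotp_ge0.
rewrite -(pmulr_rle0 _ (ltr0Sn R 1)); apply=> t /andP[t0 t1].
have Cw : C (t *: y + (1 - t) *: p).
  by have := C_convex y p (Itv01 (ltW t0) t1); rewrite !inE; apply.
have := p_min _ Cw; rewrite -(@ler_pXn2r _ 2) ?nnegrE ?enorm_ge0 // !sqr_enorm.
have -> : z - (t *: y + (1 - t) *: p) = (z - p) - t *: (y - p).
  by apply/rowP => i; rewrite !mxE; ring.
move: (z - p) (y - p) => a b.
rewrite !(dotpBl, dotpBr, dotpZl, dotpZr) [dotp b a]dotpC => h.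
by rewrite -(ler_pM2l t0); lra.
Qed.

Lemma is_proj_sqr_le C z p y : convex_set C ->
  is_proj C z p -> C y -> dotp (p - y) (p - y) <= dotp (z - y) (z - y).
Proof.
move=> C_convex p_proj Cy; have := is_proj_dotp_le0 C_convex p_proj Cy.
have -> : z - y = (z - p) + (p - y) by rewrite addrA subrK.
rewrite -[y - p]opprB dotpNr; move: (z - p) (p - y) => a b.
rewrite !(dotpDl, dotpDr) [dotp b a]dotpC; have := dotp_ge0 a; lra.
Qed.

Lemma dist_set_ge0 y S : 0 <= dist_set y S.
Proof.
have [->|/set0P[z Sz]] := eqVneq S set0; first by rewrite /dist_set image_set0 inf0.
apply: lb_le_inf; first by exists (enorm (y - z)), z.
by move=> _ [w _ <-]; exact: enorm_ge0.
Qed.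

Lemma dist_set_le y S z : S z -> dist_set y S <= enorm (y - z).
Proof.
move=> Sz; apply: ge_inf; last by exists z.
by exists 0 => _ [w _ <-]; exact: enorm_ge0.
Qed.

Lemma dist_set_eq0 y S : S y -> dist_set y S = 0.
Proof.
move=> Sy; apply/eqP; rewrite eq_le dist_set_ge0 andbT.
by have := dist_set_le y Sy; rewrite subrr enorm0.
Qed.

Lemma dist_set_sqr_le S y y' c : S !=set0 ->
  (forall z, S z -> enorm (y' - z) ^+ 2 <= enorm (y - z) ^+ 2 + c) ->
  dist_set y' S ^+ 2 <= dist_set y S ^+ 2 + c.
Proof.
move=> [z0 Sz0] hS; apply/ler_addgt0Pr => e e0.
set D := dist_set y S; have D0 : 0 <= D := dist_set_ge0 y S.
(* [d] is small enough that [(D + d)^2 <= D^2 + e] *)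
have den0 : 0 < 2 * D + 1 + e by lra.
pose d := e / (2 * D + 1 + e).
have d0 : 0 < d by rewrite divr_gt0.
have dD : d * (2 * D + d) <= e.
  have d1 : d <= 1 by rewrite ler_pdivrMr ?mul1r //; lra.
  have -> : e = d * (2 * D + 1 + e) by rewrite divfK ?gt_eqF.
  by rewrite ler_wpM2l ?ltW //; lra.
have [_ [z Sz <-] yz_lt] : exists2 r, [set enorm (y - z) | z in S] r & r < D + d.
  apply: inf_adherent => //; split; first by exists (enorm (y - z0)), z0.
  by exists 0 => _ [w _ <-]; exact: enorm_ge0.
have := hS z Sz; have := dist_set_le y' Sz; have := dist_set_ge0 y' S.
have := enorm_ge0 (y - z); have := enorm_ge0 (y' - z); nra.
Qed.

Lemma ball_enorm y v e : enorm (v - y) < e -> ball y e v.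
Proof. by rewrite -ball_normE /= enormB; apply: le_lt_trans (mx_norm_le_enorm _). Qed.

Lemma nbhs_dotp_lt y e : 0 < e -> nbhs y [set v | dotp (v - y) (v - y) < e].
Proof.
move=> e0; have n1 : 0 < n%:R + 1 :> R by rewrite ltr_wpDl.
set s := e / (n%:R + 1); have s0 : 0 < s by rewrite divr_gt0.
have sn : s * (n%:R + 1) = e by rewrite divfK ?gt_eqF.
apply/nbhs_ballP; exists (Num.sqrt s); first by rewrite /= sqrtr_gt0.
move=> v; rewrite -ball_normE /= distrC => vy_lt.
have vy_sq : `|v - y| ^+ 2 <= s.
  by rewrite -(sqr_sqrtr (ltW s0)) lerXn2r ?nnegrE ?normr_ge0 ?sqrtr_ge0 ?ltW.
have := dotp_le_mx_norm (v - y); have : 0 <= n%:R :> R by []; nra.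
Qed.

Lemma enorm_cvg0 (u : nat -> V) l :
  (fun k => enorm (u k - l)) @ \oo --> 0 -> u @ \oo --> l.
Proof.
move=> ul0; apply/subr_cvg0; apply: norm_cvg0.
apply: (squeeze_cvgr _ (cvg_cst 0) ul0).
by near=> k; rewrite normr_ge0 mx_norm_le_enorm.
Unshelve. all: by end_near.
Qed.

Lemma compact_closedI_ball C y r : closed C -> 0 < r ->
  compact (C `&` closed_ball y r).
Proof.
move=> C_closed r0; apply: bounded_closed_compact; last first.
  by apply: closedI => //; exact: closed_ball_closed.
exists (r + `|y|); split; first by rewrite num_real.
move=> M hM v [_]; rewrite closed_ballE // /closed_ball_ /= => yv_le.
by rewrite -[v](subKr y); apply: le_trans (ler_normB _ _) _; lra.
Qed.

End Euclidean.

Lemma finite_nat_set_eventually_notin (A : set nat) :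
  finite_set A -> exists K, forall k, (K <= k)%N -> ~ A k.
Proof.
move/finite_seqP => [s ->]; exists (\max_(i <- s) i).+1 => k + ks.
by rewrite ltnNge (@leq_bigmax_seq _ s xpredT id k ks).
Qed.

Lemma infinite_nat_set_unbounded (A : set nat) :
  infinite_set A -> forall i, exists2 k, (i <= k)%N & A k.
Proof.
move=> A_infinite i; apply: contrapT => A_bounded; apply: A_infinite.
apply: (sub_finite_set _ (finite_II i)) => k Ak /=; rewrite ltnNge; apply/negP => ik.
by apply: A_bounded; exists k.
Qed.

Section RealSequences.
Variable R : realType.
Implicit Types a b c d alpha beta : R^nat.

Lemma sqr_cvg0 d : (forall k, 0 <= d k) ->
  (fun k => d k ^+ 2) @ \oo --> 0 -> d @ \oo --> 0.
Proof.
move=> d0 d2_cvg; apply/cvgrPdist_lt => e e0.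
move/cvgrPdist_lt : d2_cvg => /(_ _ (exprn_gt0 2 e0)); apply: filterS => k.
by rewrite !sub0r !normrN !ger0_norm ?sqr_ge0 //; have := d0 k; nra.
Qed.

Definition frequently_small d :=
  forall e, 0 < e -> forall i, exists2 k, (i <= k)%N & d k < e.

Lemma telescope_le a b beta K :
  (forall k, (K <= k)%N -> a k.+1 + b k <= a k + beta k) ->
  forall m, (K <= m)%N ->
    a m + \sum_(K <= i < m) b i <= a K + \sum_(K <= i < m) beta i.
Proof.
move=> ab_step m /subnKC <-; elim: (m - K)%N => [|j IH].
  by rewrite addn0 !big_geq // !addr0.
by rewrite addnS !big_nat_recr ?leq_addr //=; have := ab_step _ (leq_addr j K); lra.
Qed.

Lemma sum_le_lim_sub_series beta : (forall k, 0 <= beta k) -> cvgn (series beta) ->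
  forall i m, \sum_(i <= k < m) beta k <= limn (series beta) - series beta i.
Proof.
move=> beta0 beta_sum i m.
have beta_nd : nondecreasing_seq (series beta).
  by apply/nondecreasing_seqP => k; rewrite seriesSr lerDl.
have [im|mi] := leqP i m; last first.
  by rewrite big_geq ?(ltnW mi) // subr_ge0 nondecreasing_cvgn_le.
by rewrite -sub_series_geq // lerB // nondecreasing_cvgn_le.
Qed.

Lemma quasi_fejer_bounded d beta K : (forall k, 0 <= beta k) -> cvgn (series beta) ->
  (forall k, (K <= k)%N -> d k.+1 <= d k + beta k) ->
  forall k, (K <= k)%N -> d k <= d K + limn (series beta).
Proof.
move=> beta0 beta_sum d_step k Kk.
have d_step0 j : (K <= j)%N -> d j.+1 + 0 <= d j + beta j by rewrite addr0; exact: d_step.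
have := telescope_le d_step0 Kk; rewrite big1 // addr0.
have := sum_le_lim_sub_series beta0 beta_sum K k.
have : 0 <= series beta K by apply: sumr_ge0.
lra.
Qed.

Lemma quasi_fejer_cvg0 d beta K : (forall k, 0 <= beta k) -> cvgn (series beta) ->
  (forall k, 0 <= d k) -> (forall k, (K <= k)%N -> d k.+1 <= d k + beta k) ->
  frequently_small d -> d @ \oo --> 0.
Proof.
move=> beta0 beta_sum d0 d_step d_small; apply/cvgrPdist_lt => e e0.
have e2 : 0 < e / 2 by rewrite divr_gt0.
have [N _ tail_lt] : \forall i \near \oo, limn (series beta) - series beta i < e / 2.
  by move/cvgrPdist_lt : beta_sum => /(_ _ e2); apply: filterS => i; apply: le_lt_trans (ler_norm _).
have [k Nk dk] := d_small _ e2 (maxn N K).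
have d_step0 j : (k <= j)%N -> d j.+1 + 0 <= d j + beta j.
  by rewrite addr0 => kj; apply: d_step; apply: leq_trans kj; apply: leq_trans Nk; rewrite leq_maxr.
exists k => // m km /=; rewrite sub0r normrN ger0_norm //.
have := telescope_le d_step0 km; rewrite big1 // addr0.
have := sum_le_lim_sub_series beta0 beta_sum k m.
have := tail_lt k (leq_trans (leq_maxl N K) Nk).
lra.
Qed.

Lemma fejer_frequently_small a c alpha K :
  (forall k, 0 <= a k) -> (forall k, 0 <= alpha k) ->
  series alpha @ \oo --> +oo -> cvgn (series (fun k => alpha k ^+ 2)) ->
  (forall k, (K <= k)%N -> a k.+1 <= a k - 2 * alpha k * c k + alpha k ^+ 2) ->
  frequently_small c.
Proof.
move=> a0 alpha0 alpha_div alpha2_sum a_step eta eta0 i; apply: contrapT => c_large.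
set K' := maxn K i.
have c_ge k : (K' <= k)%N -> eta <= c k.
  move=> K'k; rewrite leNgt; apply/negP => ck; apply: c_large; exists k => //.
  by apply: leq_trans K'k; rewrite leq_maxr.
have step k : (K' <= k)%N -> a k.+1 + 2 * eta * alpha k <= a k + alpha k ^+ 2.
  move=> K'k; have := a_step k (leq_trans (leq_maxl K i) K'k).
  have := c_ge k K'k; have := alpha0 k; nra.
set L := limn (series (fun k => alpha k ^+ 2)).
have eta2 : 0 < 2 * eta by rewrite mulr_gt0.
have sum_alpha m : (K' <= m)%N -> series alpha m - series alpha K' <= (a K' + L) / (2 * eta).
  move=> K'm; rewrite sub_series_geq // ler_pdivlMr // mulrC mulr_sumr.
  have := telescope_le step K'm.
  have := sum_le_lim_sub_series (fun k => sqr_ge0 (alpha k)) alpha2_sum K' m.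
  have : 0 <= series (fun k => alpha k ^+ 2) K' by apply: sumr_ge0 => k _; exact: sqr_ge0.
  have := a0 m; rewrite -/L; lra.
move/cvgryPge : alpha_div => /(_ (series alpha K' + (a K' + L) / (2 * eta) + 1)) [N _ hN].
have := hN _ (leq_maxl N K'); have := sum_alpha _ (leq_maxr N K'); lra.
Qed.

Lemma compact_cluster_frequently_small (X : topologicalType) (T : set X)
    (u : nat -> X) c K :
  compact T -> (forall k, (K <= k)%N -> T (u k)) -> frequently_small c ->
  exists2 y, T y & forall N, nbhs y N -> forall e, 0 < e -> forall i,
    exists k, [/\ (i <= k)%N, c k < e & N (u k)].
Proof.
move=> T_compact uT c_small.
pose D := [set p : nat * R | (K <= p.1)%N /\ 0 < p.2].
pose tail (p : nat * R) := u @` [set k | (p.1 <= k)%N /\ c k < p.2].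
have F_filter : Filter (filter_from D tail).
  apply: filter_from_filter; first by exists (K, 1).
  move=> [i1 e1] [i2 e2] [/= Ki1 e10] [/= Ki2 e20].
  exists (maxn i1 i2, Num.min e1 e2); first by split; rewrite /= ?leq_max ?Ki1 // lt_min e10.
  move=> _ [k [/= + +] <-]; rewrite geq_max lt_min => /andP[i1k i2k] /andP[ck1 ck2].
  by split; exists k.
have F_proper : ProperFilter (filter_from D tail).
  apply: filter_from_proper => -[i e] [/= Ki e0].
  by have [k ik ck] := c_small e e0 i; exists (u k), k.
have [|y [Ty y_cluster]] := T_compact _ F_proper.
  by exists (K, 1) => //= _ [k [Kk _] <-]; exact: uT.
exists y => // N yN e e0 i.
have F_tail : filter_from D tail (tail (maxn K i, e)).
  by exists (maxn K i, e) => //; split; rewrite /= ?leq_maxl.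
have [_ [[k [/= ik ck] <-] Nuk]] := y_cluster _ _ F_tail yN.
by exists k; split => //; apply: leq_trans ik; rewrite leq_maxr.
Qed.

End RealSequences.

Lemma not_SEP_lt0 (R : realType) (n : nat) (C : set 'rV[R]_n) f u y :
  pseudomonotone_on C f -> paramonotone_on C f ->
  C u -> ~ SEP C f u -> SEP C f y -> (f u y < 0)%E.
Proof.
move=> f_pm f_pa Cu uNS [Cy y_sol].
have fuy_le0 : (f u y <= 0)%E by apply: f_pm => //; exact: y_sol.
rewrite lt_neqAle fuy_le0 andbT; apply/negP => /eqP fuy0; apply: uNS.
apply: (f_pa y u) => //; apply/eqP; rewrite eq_le y_sol // andbT.
by apply: f_pm => //; rewrite fuy0.
Qed.

Section NormalSubgradientMethod.
Variables (R : realType) (n : nat) (C : set 'rV[R]_n).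
Variables (f : 'rV[R]_n -> 'rV[R]_n -> \bar R) (alpha : R^nat) (x g : nat -> 'rV[R]_n).
Notation S := (SEP C f).
Hypotheses (C_closed : closed C) (C_convex : convex_set C).
Hypotheses (f_pm : pseudomonotone_on C f) (f_pa : paramonotone_on C f).
Hypothesis f_usc : forall u v, C u -> C v -> usc_at (fun q => f q.1 q.2) (u, v).
Hypothesis alpha_gt0 : forall k, 0 < alpha k.
Hypothesis x0_in_C : C (x 0%N).
Hypothesis g_normal : forall k, normal_subdiff f (x k) (g k).
Hypothesis g_neq0 : forall k, g k != 0.
Hypothesis x_step :
  forall k, is_proj C (x k - alpha k *: ((enorm (g k))^-1 *: g k)) (x k.+1).

Definition gdir k := (enorm (g k))^-1 *: g k.

Lemma iterate_in_C k : C (x k).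
Proof. by case: k => [|k] //; case: (x_step k). Qed.

Lemma enorm_g_gt0 k : 0 < enorm (g k).
Proof. by rewrite enorm_gt0. Qed.

Lemma dotp_gdir k : dotp (gdir k) (gdir k) = 1.
Proof.
have := enorm_g_gt0 k; rewrite dotpZl dotpZr -sqr_enorm lt0r => /andP[g0 _].
by field.
Qed.

Lemma gdir_dotp_gt0 k y : ~ S (x k) -> S y -> 0 < dotp (gdir k) (x k - y).
Proof.
move=> xkNS Sy.
have := g_normal (not_SEP_lt0 f_pm f_pa (iterate_in_C k) xkNS Sy).
by rewrite -opprB dotpNr oppr_lt0 => g_pos; rewrite dotpZl mulr_gt0 ?invr_gt0 ?enorm_g_gt0.
Qed.

Lemma iterate_sqr_le k y : C y ->
  dotp (x k.+1 - y) (x k.+1 - y) <=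
  dotp (x k - y) (x k - y) - 2 * alpha k * dotp (gdir k) (x k - y) + alpha k ^+ 2.
Proof.
move=> Cy; apply: le_trans (is_proj_sqr_le C_convex (x_step k) Cy) _.
rewrite -/(gdir k) addrAC; have := dotp_gdir k; move: (x k - y) (gdir k) => a b b1.
by rewrite !(dotpBl, dotpBr, dotpZl, dotpZr) b1 [dotp b a]dotpC; lra.
Qed.

Lemma iterate_quasi_fejer k y : ~ S (x k) -> S y ->
  dotp (x k.+1 - y) (x k.+1 - y) <= dotp (x k - y) (x k - y) + alpha k ^+ 2.
Proof.
move=> xkNS Sy; have := iterate_sqr_le k (proj1 Sy).
have := gdir_dotp_gt0 xkNS Sy; have := alpha_gt0 k; nra.
Qed.

Lemma dist_SEP_sqr_le k : S !=set0 ->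
  dist_set (x k.+1) S ^+ 2 <= dist_set (x k) S ^+ 2 + alpha k ^+ 2.
Proof.
move=> S_nonempty; have [Sxk|xkNS] := pselect (S (x k)); last first.
  by apply: dist_set_sqr_le => // z Sz; rewrite !sqr_enorm; exact: iterate_quasi_fejer.
apply: (@le_trans _ _ (alpha k ^+ 2)); last by rewrite (dist_set_eq0 Sxk); nra.
have := iterate_sqr_le k (iterate_in_C k); rewrite subrr !dotp0r mulr0 subr0 add0r.
apply: le_trans; rewrite -sqr_enorm lerXn2r ?nnegrE ?dist_set_ge0 ?enorm_ge0 //.
exact: dist_set_le.
Qed.

Lemma dist_SEP_cvg0 : S !=set0 -> cvgn (series (fun k => alpha k ^+ 2)) ->
  infinite_set [set k | S (x k)] -> (fun k => dist_set (x k) S) @ \oo --> 0.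
Proof.
move=> S_nonempty alpha2_sum S_often; apply: sqr_cvg0 => [k|]; first exact: dist_set_ge0.
apply: (quasi_fejer_cvg0 (K := 0%N) _ alpha2_sum) => [k|k|k _|e e0 i].
- exact: sqr_ge0.
- exact: sqr_ge0.
- exact: dist_SEP_sqr_le.
- have [k ik Sxk] := infinite_nat_set_unbounded S_often i.
  by exists k; rewrite // dist_set_eq0 // expr2 mul0r.
Qed.

Lemma cluster_in_SEP xs xb : S xs -> C xb ->
  (forall N, nbhs xb N -> forall e, 0 < e ->
     exists k, dotp (gdir k) (x k - xs) < e /\ N (x k)) -> S xb.
Proof.
move=> Sxs Cxb xb_cluster; apply: contrapT => xbNS.
have /nbhs_ballP[e e0 f_lt0] := f_usc Cxb (proj1 Sxs) (not_SEP_lt0 f_pm f_pa Cxb xbNS Sxs).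
have e2 : 0 < e / 2 by rewrite divr_gt0.
have [k [ck xk_near]] := xb_cluster _ (nbhsx_ballx xb e e0) _ e2.
(* [b] is [e]-close to [xs], so [b] is in [L_f (x k)], yet
   [<gdir k, b - x k> = e / 2 - <gdir k, x k - xs> > 0] *)
pose b := xs + (e / 2) *: gdir k.
have /g_normal : (f (x k) b < 0)%E.
  apply: (f_lt0 (x k, b)); split => //=; apply: ball_enorm.
  by rewrite /b addrC addKr enormZ /enorm dotp_gdir sqrtr1 mulr1 gtr0_norm //; lra.
have -> : g k = enorm (g k) *: gdir k.
  by rewrite scalerA mulfV ?scale1r // gt_eqF // enorm_g_gt0.
have -> : b - x k = (e / 2) *: gdir k - (x k - xs).
  by apply/rowP => i; rewrite !mxE; ring.
rewrite dotpZl dotpBr dotpZr dotp_gdir mulr1 pmulr_rlt0 ?enorm_g_gt0 //; lra.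
Qed.

Lemma iterates_cvg_SEP : S !=set0 -> series alpha @ \oo --> +oo ->
  cvgn (series (fun k => alpha k ^+ 2)) -> finite_set [set k | S (x k)] ->
  exists xs, S xs /\ x @ \oo --> xs.
Proof.
move=> [xs Sxs] alpha_div alpha2_sum /finite_nat_set_eventually_notin[K xNS].
have alpha2_ge0 k : 0 <= alpha k ^+ 2 by exact: sqr_ge0.
have fejer y : S y -> forall k, (K <= k)%N ->
    dotp (x k.+1 - y) (x k.+1 - y) <= dotp (x k - y) (x k - y) + alpha k ^+ 2.
  by move=> Sy k Kk; exact: iterate_quasi_fejer (xNS k Kk) Sy.
have c_small : frequently_small (fun k => dotp (gdir k) (x k - xs)).
  apply: (fejer_frequently_small (a := fun k => dotp (x k - xs) (x k - xs))
    (alpha := alpha) (K := 0%N)) => // [k|k|k _].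
  - exact: dotp_ge0.
  - exact: ltW.
  - exact: iterate_sqr_le (proj1 Sxs).
set B := dotp (x K - xs) (x K - xs) + limn (series (fun k => alpha k ^+ 2)).
have r0 : 0 < Num.sqrt B + 1 by rewrite ltr_wpDl ?sqrtr_ge0.
have xT k : (K <= k)%N -> (C `&` closed_ball xs (Num.sqrt B + 1)) (x k).
  move=> Kk; split; first exact: iterate_in_C.
  rewrite closed_ballE // /closed_ball_ /=; apply: le_trans (mx_norm_le_enorm _) _.
  rewrite enormB; apply: le_trans (_ : Num.sqrt B <= _); last by rewrite lerDl.
  exact/ler_wsqrtr/(quasi_fejer_bounded alpha2_ge0 alpha2_sum (fejer xs Sxs)).
have [xb [Cxb _] xb_cluster] :=
  compact_cluster_frequently_small (compact_closedI_ball C_closed r0) xT c_small.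
have Sxb : S xb.
  apply: cluster_in_SEP Sxs Cxb _ => N xbN e e0.
  by have [k [_ ck Nxk]] := xb_cluster N xbN e e0 0%N; exists k.
exists xb; split => //; apply: enorm_cvg0; apply: sqr_cvg0 => [k|]; first exact: enorm_ge0.
under eq_fun do rewrite sqr_enorm.
apply: (quasi_fejer_cvg0 (K := K) alpha2_ge0 alpha2_sum) => [k|k Kk|e e0 i].
- exact: dotp_ge0.
- exact: fejer Sxb k Kk.
- have [k [ik _ xk_near]] := xb_cluster _ (nbhs_dotp_lt xb e0) 1 ltr01 i.
  by exists k.
Qed.

End NormalSubgradientMethod.

Unset Implicit Arguments.

Theorem theorem1 (R : realType) (n : nat) (C : set 'rV[R]_n)
  (f : 'rV[R]_n -> 'rV[R]_n -> \bar R)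
  (alpha : R ^nat) (x g : nat -> 'rV[R]_n) :
  (* standing assumptions on C and f *)
  C !=set0 -> closed C -> convex_set C ->
  (forall u v, f u v != -oo%E) ->
  (forall u, C u -> f u u = 0%E) ->
  (forall u v, C u -> C v -> f u v \is a fin_num) ->
  (* (A1) *)
  (forall u, C u -> quasiconvex (f u)) ->
  (exists U : set ('rV[R]_n * 'rV[R]_n), open U /\
     (forall u v, C u -> C v -> U (u, v)) /\
     (forall p, U p -> usc_at (fun q => f q.1 q.2) p)) ->
  (* (A2) *)
  pseudomonotone_on C f -> paramonotone_on C f ->
  (* (A3) *)
  SEP C f !=set0 ->
  (* step sizes *)
  (forall k, 0 < alpha k) ->
  (series alpha @ \oo --> +oo) ->
  cvgn (series (fun k => alpha k ^+ 2)) ->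
  (* the Normal-subgradient method, not terminating *)
  C (x 0%N) ->
  (forall k, normal_subdiff f (x k) (g k)) ->
  (forall k, g k != 0) ->
  (forall k, is_proj C (x k - alpha k *: ((enorm (g k))^-1 *: g k)) (x k.+1)) ->
  (forall k, x k.+1 != x k) ->
  (* conclusions *)
  (infinite_set [set k | SEP C f (x k)] ->
     (fun k => dist_set (x k) (SEP C f)) @ \oo --> 0) /\
  (finite_set [set k | SEP C f (x k)] ->
     exists xs, SEP C f xs /\ x @ \oo --> xs).
Proof.
move=> _ C_closed C_convex _ _ _ _ [U [_ [U_CC U_usc]]] f_pm f_pa S_nonempty
  alpha_gt0 alpha_div alpha2_sum x0_in_C g_normal g_neq0 x_step _.
have f_usc u v : C u -> C v -> usc_at (fun q => f q.1 q.2) (u, v).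
  by move=> Cu Cv; apply/U_usc/U_CC.
by split; [exact: dist_SEP_cvg0 | exact: iterates_cvg_SEP].
Qed.
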